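(* Let $m<k$ be positive integers with $\gcd(m,k)=1$, $t\ge2$ an integer, and $n=tk$ (without offset) or $n=2(tk-m)$ (with offset); let $w=k$ (without offset) or $w=n/2$ (with offset). For each $0\le i<w$, the placement procedure for wedge $i$ described in the context is well-defined (for $i\ge1$, an index $j$ with $f^{i-1}_j=i$ exists, so $j^*$ is defined). Moreover, if $i\ge1$, the lower boundary of wedge $i$ aligns exactly with the front after placing wedge $i-1$, i.e. $\ell^i_j=f^{i-1}_{j^*+j}$ for all $j\ge0$. Finally, the front after placing wedge $i$ satisfies $f^i_j=s^{i+1}_j$ for all $j\ge0$.
   Context: Let $\vec v_i=(\cos\frac{2\pi i}{n},\sin\frac{2\pi i}{n})$. Wedge $0$ is a region tiled by translates of a fixed polygon (the prototile), bounded by its lower boundary, the polygonal path from the origin with successive steps $\vec v_{b_0},\vec v_{b_1},\dots$ where $b_j=\ell^0_j:=jm\bmod k$, and its upper boundary, the polygonal path from the origin with successive steps $\vec v_{u^0_j}$, where $u^0_j=jm\bmod k$ if this is nonzero and $u^0_j=k$ otherwise. Its base edge is the first segment of the lower boundary. Set $\ell^i_j=\ell^0_j+i$ and $u^i_j=u^0_j+i$. Placement: the front after wedge $0$ has direction sequence $f^0_j=u^0_j$. For $i\ge1$, let $j^*$ be the minimal index with $f^{i-1}_{j^*}=i$; wedge $i$ is wedge $0$ rotated counterclockwise by $\frac{2\pi i}{n}$ about the origin and translated by $\sum_{j=0}^{j^*-1}\vec v_{f^{i-1}_j}$ (so its base edge coincides with the first front edge in direction $i$); its lower and upper boundaries have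 direction sequences $(\ell^i_j)$ and $(u^i_j)$. The new front (upper boundary of the region covered so far, starting at the origin) has direction sequence $f^i_j=f^{i-1}_j$ for $j<j^*$ and $f^i_{j^*+j}=u^i_j$ for $j\ge0$. Shifted modular progression: $s^0_j=jm\bmod k$, and $s^{i+1}_j=s^i_j+k$ if $s^i_j=i$, $s^{i+1}_j=s^i_j$ otherwise. *)

From mathcomp Require Import all_boot.
Set Implicit Arguments. Unset Strict Implicit. Unset Printing Implicit Defensive.

Definition lo0 (m k j : nat) : nat := (j * m) %% k.
Definition lo (m k i j : nat) : nat := lo0 m k j + i.
Definition up0 (m k j : nat) : nat :=
  if (j * m) %% k == 0 then k else (j * m) %% k.
Definition up (m k i j : nat) : nat := up0 m k j + i.

Fixpoint sprog (m k i j : nat) : nat :=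
  match i with
  | 0 => (j * m) %% k
  | i'.+1 => if sprog m k i' j == i' then sprog m k i' j + k
             else sprog m k i' j
  end.

(* [front m k i f] : f is the direction sequence of the front after placing
   wedge i by the placement procedure (f^0 = u^0; f^i obtained from f^{i-1}
   by cutting at the minimal index j* with f^{i-1}_{j*} = i and appending u^i).
   The relation is only inhabited at stage i if j* exists at every stage. *)
Inductive front (m k : nat) : nat -> (nat -> nat) -> Prop :=
| front0 : front m k 0 (up0 m k)
| frontS (i : nat) (f : nat -> nat) (js : nat) :
    front m k i f ->
    f js = i.+1 ->
    (forall j, j < js -> f j <> i.+1) ->
    front m k i.+1 (fun j => if j < js then f j else up m k i.+1 (j - js)).

From mathcomp Require Import all_boot.
From mathcomp Require Import zify.
Set Implicit Arguments. Unset Strict Implicit.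

(* Everything follows from one invariant: the front after wedge i carries at
   index j the unique number congruent to j m mod k in the window [i+1, i+k],
   and s^{i+1}_j is that same number.  Placing wedge i+1 moves the window up by
   one: entries before j* differ from i+1 and stay, while the appended
   u^{i+1}_d = u^0_d + (i+1) lies in [i+2, i+k+1] and is congruent to (j*+d) m,
   because f_{j*} = i+1 is congruent to j* m.  As m is invertible mod k, the
   value i+1 occurs in the window, so j* exists; and l^{i+1}_j lies in the
   window [i+1, i+k] with residue (j*+j) m, hence equals f_{j*+j}. *)

Definition window_rep (k a r x : nat) : bool :=
  (x == r %[mod k]) && (a <= x < a + k).

Lemma window_rep_uniq k a r x y :
  window_rep k a r x -> window_rep k a r y -> x = y.
Proof.
wlog le_xy : x y / x <= y.
  by move=> H Hx Hy; case: (leqP x y) => [/H|/ltnW /H /(_ Hy Hx)] ->.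
move=> /andP[/eqP ex /andP[ax xk]] /andP[/eqP ey /andP[ay yk]].
have /eqP : x + (y - x) = x + 0 %[mod k] by rewrite subnKC // addn0 ex ey.
by rewrite eqn_modDl mod0n modn_small; [move=> /eqP; lia | lia].
Qed.

Lemma window_rep_shift k a r x : window_rep k a r x ->
  window_rep k a.+1 r (if x == a then x + k else x).
Proof.
case/andP=> /eqP ex /andP[ax xk]; rewrite /window_rep.
by case: (x =P a) => xa; rewrite ?modnDr ex eqxx /=; apply/andP; lia.
Qed.

Lemma window_rep_addn k a r x b c : window_rep k a r x -> b = c %[mod k] ->
  window_rep k (a + b) (r + c) (x + b).
Proof.
case/andP=> /eqP ex /andP[ax xk] ebc; rewrite /window_rep.
by rewrite -modnDm ex ebc modnDm eqxx /=; apply/andP; lia.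
Qed.

Lemma mul_modn_surj m k a : coprime m k -> exists j, j * m = a %[mod k].
Proof.
move=> co_mk; exists (chinese m k 0 a %/ m).
have /eqP : chinese m k 0 a = 0 %[mod m] by exact: chinese_modl.
by rewrite mod0n -/(dvdn _ _) => /divnK ->; exact: chinese_modr.
Qed.

Section Fronts.

Variables m k : nat.
Hypothesis k_gt0 : 0 < k.

Lemma sprog_window_rep i j : window_rep k i (j * m) (sprog m k i j).
Proof.
elim: i => [|i IH] /=; last exact: window_rep_shift.
by rewrite /window_rep modn_mod eqxx ltn_pmod.
Qed.

Lemma up0_window_rep j : window_rep k 1 (j * m) (up0 m k j).
Proof.
rewrite /window_rep /up0; have := ltn_pmod (j * m) k_gt0.
by case: (j * m %% k =P 0) => [e|ne] _; rewrite ?modnn ?modn_mod ?e eqxx /=; apply/andP; lia.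
Qed.

Lemma lo0_window_rep j : window_rep k 0 (j * m) (lo0 m k j).
Proof. by rewrite /window_rep /lo0 modn_mod eqxx ltn_pmod. Qed.

Lemma front_window_rep i f : front m k i f ->
  forall j, window_rep k i.+1 (j * m) (f j).
Proof.
elim=> {i f} [|i f js _ IH fjs fmin] j; first exact: up0_window_rep.
have /andP[/eqP ejs _] := IH js; rewrite fjs in ejs.
case: ifP => [lt_j_js | /negbT]; last rewrite -leqNgt => le_js_j.
  have := window_rep_shift (IH j).
  by case: eqP => [/(fmin j lt_j_js) | _].
have := window_rep_addn (up0_window_rep (j - js)) ejs.
by rewrite add1n -mulnDl subnK.
Qed.

Lemma front_eq_sprog i f : front m k i f -> forall j, f j = sprog m k i.+1 j.
Proof.
by move=> fr j; apply: window_rep_uniq (front_window_rep fr j) (sprog_window_rep _ _).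
Qed.

Lemma front_lo_align i g js : front m k i g -> g js = i.+1 ->
  forall j, lo m k i.+1 j = g (js + j).
Proof.
move=> fr gjs j; apply: window_rep_uniq (front_window_rep fr (js + j)).
have /andP[/eqP ejs _] := front_window_rep fr js; rewrite gjs in ejs.
by have := window_rep_addn (lo0_window_rep j) ejs; rewrite add0n (addnC (j * m)) -mulnDl.
Qed.

Hypothesis co_mk : coprime m k.

Lemma front_hits_next i f : front m k i f -> exists j, f j = i.+1.
Proof.
move=> fr; have [j ej] := mul_modn_surj i.+1 co_mk; exists j.
apply: window_rep_uniq (front_window_rep fr j) _.
by rewrite /window_rep ej eqxx leqnn /=; lia.
Qed.

Lemma front_exists i : exists f, front m k i f.
Proof.
elim: i => [|i [f fr]]; first by exists (up0 m k); constructor.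
have hit : exists j, f j == i.+1.
  by have [j fj] := front_hits_next fr; exists j; apply/eqP.
case: (ex_minnP hit) => js /eqP fjs js_min.
eexists; apply: (frontS fr fjs) => j lt_j_js /eqP /js_min.
by rewrite leqNgt lt_j_js.
Qed.

End Fronts.

(* The invariants hold at every stage. *)
Theorem mainTheorem2 (m k t : nat) (offset : bool) :
  0 < m -> m < k -> coprime m k -> 2 <= t ->
  let n := if offset then 2 * (t * k - m) else t * k in
  let w := if offset then n %/ 2 else k in
  forall i, i < w ->
    (* well-definedness: the procedure produces a front after wedge i *)
    (exists f, front m k i f) /\
    (* for i >= 1: j* exists, and lower boundary of wedge i aligns with f^{i-1} *)
    (0 < i -> forall g, front m k i.-1 g ->
        (exists j, g j = i) /\
        (forall js, g js = i -> (forall j, j < js -> g j <> i) ->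
           forall j, lo m k i j = g (js + j))) /\
    (* f^i_j = s^{i+1}_j *)
    (forall f, front m k i f -> forall j, f j = sprog m k i.+1 j).
Proof.
move=> _ mk co_mk _ n w i _.
have k_gt0 : 0 < k by apply: leq_trans mk.
split; first exact: front_exists.
split; last exact: front_eq_sprog.
case: i => [//|i] _ g fr /=; split; first exact: front_hits_next fr.
by move=> js gjs _; exact: front_lo_align.
Qed.
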